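(* Let $\mathcal{C}$ be a category and $\mathcal{D}$ a cartesian closed category with internal hom $[-,-]$, and let $F,G,H:\mathcal{C}^{op}\times\mathcal{C}\to\mathcal{D}$ be functors. There is a bijection between dinatural transformations $F\times G\Rightarrow H$ (where $(F\times G)(x',x)=F(x',x)\times G(x',x)$) and dinatural transformations $G\Rightarrow E$, where $E:\mathcal{C}^{op}\times\mathcal{C}\to\mathcal{D}$ is $E(x',x):=[F(x,x'),H(x',x)]$.
   Context: For $F,G:\mathcal{C}^{op}\times\mathcal{C}\to\mathcal{D}$, a dinatural transformation is a family $\alpha_x:F(x,x)\to G(x,x)$ such that for every $f:a\to b$: $G(f,\mathrm{id}_b)\circ\alpha_b\circ F(\mathrm{id}_b,f)=G(\mathrm{id}_a,f)\circ\alpha_a\circ F(f,\mathrm{id}_a)$. *)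

From mathcomp Require Import ssreflect ssrfun.

Set Implicit Arguments.
Unset Strict Implicit.
Set Universe Polymorphism.

Record Category := {
  ob :> Type;
  hom : ob -> ob -> Type;
  idm : forall a, hom a a;
  comp : forall a b c, hom b c -> hom a b -> hom a c;
  comp_id_l : forall a b (f : hom a b), comp (idm b) f = f;
  comp_id_r : forall a b (f : hom a b), comp f (idm a) = f;
  comp_assoc : forall a b c d (f : hom c d) (g : hom b c) (h : hom a b),
      comp f (comp g h) = comp (comp f g) h
}.

Arguments hom {C} : rename.
Arguments idm {C} a : rename.
Arguments comp {C a b c} : rename.
Arguments comp_id_l {C a b} f : rename.
Arguments comp_id_r {C a b} f : rename.
Arguments comp_assoc {C a b c d} f g h : rename.

Notation "g \o' f" := (comp g f) (at level 40, left associativity).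

Definition opCat (C : Category) : Category.
Proof.
refine {| ob := ob C; hom := fun a b => @hom C b a; idm := fun a => idm a;
          comp := fun a b c (g : hom c b) (f : hom b a) => comp f g |}.
- by move=> a b f; rewrite comp_id_r.
- by move=> a b f; rewrite comp_id_l.
- by move=> a b c d f g h; rewrite comp_assoc.
Defined.

Definition prodCat (C1 C2 : Category) : Category.
Proof.
refine {| ob := (ob C1 * ob C2)%type;
          hom := fun a b => (hom a.1 b.1 * hom a.2 b.2)%type;
          idm := fun a => (idm a.1, idm a.2);
          comp := fun a b c g f => (comp g.1 f.1, comp g.2 f.2) |}.
- by move=> a b [f1 f2] /=; rewrite !comp_id_l.
- by move=> a b [f1 f2] /=; rewrite !comp_id_r.
- by move=> a b c d [f1 f2] [g1 g2] [h1 h2] /=; rewrite !comp_assoc.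
Defined.

Record Functor (C D : Category) := {
  fobj :> ob C -> ob D;
  fmap : forall a b, hom a b -> hom (fobj a) (fobj b);
  fmap_id : forall a, fmap (idm a) = idm (fobj a);
  fmap_comp : forall a b c (g : hom b c) (f : hom a b),
      fmap (comp g f) = comp (fmap g) (fmap f)
}.
Arguments fmap {C D} F {a b} : rename.

Record CCC (D : Category) := {
  term : ob D;
  to_term : forall a, hom a term;
  to_term_unique : forall a (f : hom a term), f = to_term a;
  prodo : ob D -> ob D -> ob D;
  pr1 : forall a b, hom (prodo a b) a;
  pr2 : forall a b, hom (prodo a b) b;
  pairm : forall c a b, hom c a -> hom c b -> hom c (prodo a b);
  pairm_pr1 : forall c a b (f : hom c a) (g : hom c b), pr1 a b \o' pairm f g = f;
  pairm_pr2 : forall c a b (f : hom c a) (g : hom c b), pr2 a b \o' pairm f g = g;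
  pairm_unique : forall c a b (h : hom c (prodo a b)),
      h = pairm (pr1 a b \o' h) (pr2 a b \o' h);
  expo : ob D -> ob D -> ob D;
  evalm : forall a b, hom (prodo (expo a b) a) b;
  curry : forall c a b, hom (prodo c a) b -> hom c (expo a b);
  curry_eval : forall c a b (f : hom (prodo c a) b),
      evalm a b \o' pairm (curry f \o' pr1 c a) (pr2 c a) = f;
  curry_unique : forall c a b (g : hom c (expo a b)),
      g = curry (evalm a b \o' pairm (g \o' pr1 c a) (pr2 c a))
}.
Arguments term {D} c : rename.
Arguments prodo {D} c : rename.
Arguments pr1 {D} c {a b} : rename.
Arguments pr2 {D} c {a b} : rename.
Arguments pairm {D} c {c0 a b} : rename.
Arguments expo {D} c : rename.
Arguments evalm {D} c {a b} : rename.
Arguments curry {D} c {c0 a b} : rename.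

Section CCCFacts.
Variables (D : Category) (cc : CCC D).

Definition prodmap a b a' b' (f : hom a a') (g : hom b b') :
  hom (prodo cc a b) (prodo cc a' b') :=
  pairm cc (f \o' pr1 cc) (g \o' pr2 cc).

Definition expmap a b a' b' (f : hom a' a) (g : hom b b') :
  hom (expo cc a b) (expo cc a' b') :=
  curry cc (g \o' (evalm cc \o' prodmap (idm _) f)).

Lemma prodmap_pair c a b a' b' (f : hom a a') (g : hom b b') (h : hom c a) (k : hom c b) :
  prodmap f g \o' pairm cc h k = pairm cc (f \o' h) (g \o' k).
Proof.
rewrite [LHS]pairm_unique /prodmap !comp_assoc pairm_pr1 pairm_pr2.
by rewrite -!comp_assoc pairm_pr1 pairm_pr2.
Qed.

Lemma prodmap_comp a b a' b' a'' b'' (f : hom a' a'') (g : hom b' b'')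
  (f' : hom a a') (g' : hom b b') :
  prodmap f g \o' prodmap f' g' = prodmap (f \o' f') (g \o' g').
Proof. by rewrite {2}/prodmap prodmap_pair /prodmap !comp_assoc. Qed.

Lemma prodmap_id a b : prodmap (idm a) (idm b) = idm (prodo cc a b).
Proof.
by rewrite /prodmap [RHS]pairm_unique !comp_id_l !comp_id_r.
Qed.

Lemma pairm_comp c' c a b (h : hom c a) (k : hom c b) (l : hom c' c) :
  pairm cc h k \o' l = pairm cc (h \o' l) (k \o' l).
Proof.
by rewrite [LHS]pairm_unique !comp_assoc pairm_pr1 pairm_pr2.
Qed.

Lemma curry_comp c' c a b (k : hom (prodo cc c a) b) (m : hom c' c) :
  curry cc k \o' m = curry cc (k \o' prodmap m (idm a)).
Proof.
rewrite [LHS]curry_unique; congr (curry cc _).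
rewrite -{2}(curry_eval k) -[RHS]comp_assoc pairm_comp /prodmap.
by rewrite -[in RHS](comp_assoc (curry cc k)) pairm_pr1 pairm_pr2 comp_id_l comp_assoc.
Qed.

Lemma expmap_id a b : expmap (idm a) (idm b) = idm (expo cc a b).
Proof.
rewrite /expmap prodmap_id comp_id_r comp_id_l.
have E : pairm cc (pr1 cc) (pr2 cc) = idm (prodo cc (expo cc a b) a).
  by rewrite [RHS]pairm_unique !comp_id_r.
by rewrite [RHS]curry_unique comp_id_l E comp_id_r.
Qed.

Lemma eval_expmap a b a' b' (f : hom a' a) (g : hom b b') :
  evalm cc \o' prodmap (expmap f g) (idm a') = g \o' (evalm cc \o' prodmap (idm _) f).
Proof.
by rewrite {1}/prodmap comp_id_l /expmap curry_eval.
Qed.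

Lemma expmap_comp a b a1 b1 a2 b2 (f1 : hom a2 a1) (g1 : hom b1 b2)
  (f2 : hom a1 a) (g2 : hom b b1) :
  expmap f1 g1 \o' expmap f2 g2 = expmap (f2 \o' f1) (g1 \o' g2).
Proof.
have E : prodmap (expmap f2 g2) f1
          = prodmap (expmap f2 g2) (idm a1) \o' prodmap (idm _) f1.
  by rewrite prodmap_comp comp_id_l comp_id_r.
rewrite {1}/expmap curry_comp /expmap -!comp_assoc prodmap_comp.
rewrite comp_id_l comp_id_r -/(expmap f2 g2) E.
rewrite (comp_assoc (evalm cc)) eval_expmap.
rewrite -!comp_assoc prodmap_comp comp_id_l.
by [].
Qed.

End CCCFacts.

Arguments prodmap {D} cc {a b a' b'}.
Arguments expmap {D} cc {a b a' b'}.

Definition ProdF (C D : Category) (cc : CCC D) (F G : Functor C D) : Functor C D.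
Proof.
refine {| fobj := fun x => prodo cc (F x) (G x);
          fmap := fun a b h => prodmap cc (fmap F h) (fmap G h) |}.
- by move=> a; rewrite !fmap_id prodmap_id.
- by move=> a b c g f; rewrite !fmap_comp prodmap_comp.
Defined.

Definition ExpF (C D : Category) (cc : CCC D)
  (F H : Functor (prodCat (opCat C) C) D) : Functor (prodCat (opCat C) C) D.
Proof.
refine {| fobj := fun p : ob (prodCat (opCat C) C) =>
                    expo cc (F (p.2, p.1)) (H p);
          fmap := fun p q (h : @hom (prodCat (opCat C) C) p q) =>
                    expmap cc (@fmap _ _ F (q.2, q.1) (p.2, p.1) (h.2, h.1))
                              (fmap H h) |}.
- move=> [a1 a2]; rewrite fmap_id.
  by rewrite (@fmap_id _ _ F (a2, a1)) expmap_id.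
- move=> [a1 a2] [b1 b2] [c1 c2] [g1 g2] [f1 f2] /=.
  rewrite expmap_comp -!fmap_comp.
  by [].
Defined.

Definition dinatural (C D : Category) (F G : Functor (prodCat (opCat C) C) D)
  (alpha : forall x : ob C, hom (F (x, x)) (G (x, x))) : Prop :=
  forall (a b : ob C) (f : hom a b),
    @fmap _ _ G (b, b) (a, b) (f, idm b) \o' alpha b
      \o' @fmap _ _ F (b, a) (b, b) (idm b, f)
    = @fmap _ _ G (a, a) (a, b) (idm a, f) \o' alpha a
      \o' @fmap _ _ F (b, a) (a, a) (f, idm a).

Definition Dinat (C D : Category) (F G : Functor (prodCat (opCat C) C) D) :=
  { alpha : forall x : ob C, hom (F (x, x)) (G (x, x)) | @dinatural C D F G alpha }.

(* Transposing along the F-factor, a family alpha_x : F(x,x) x G(x,x) -> H(x,x)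
   corresponds to a family G(x,x) -> [F(x,x), H(x,x)].  Transposition is
   bijective and natural in all three variables, so the dinaturality square
   of the transposed family is the transpose of the dinaturality square of
   alpha; hence one holds iff the other does. *)
From mathcomp Require Import ssreflect ssrfun.
From Stdlib Require Import ProofIrrelevance FunctionalExtensionality.

Set Implicit Arguments.
Unset Strict Implicit.

Section LeftCurrying.
Variables (D : Category) (cc : CCC D).

Definition swapm (a b : ob D) : hom (prodo cc b a) (prodo cc a b) :=
  pairm cc (pr2 cc) (pr1 cc).

Lemma swapm_prodmap a b a' b' (g : hom b b') (p : hom a a') :
  swapm a' b' \o' prodmap cc g p = prodmap cc p g \o' swapm a b.
Proof. by rewrite /swapm pairm_comp prodmap_pair /prodmap pairm_pr1 pairm_pr2. Qed.

Lemma swapmK a b : swapm a b \o' swapm b a = idm _.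
Proof.
rewrite /swapm pairm_comp pairm_pr1 pairm_pr2.
by rewrite [RHS]pairm_unique !comp_id_r.
Qed.

Definition uncurry (c a b : ob D) (u : hom c (expo cc a b)) : hom (prodo cc c a) b :=
  evalm cc \o' prodmap cc u (idm a).

Lemma curryK c a b : cancel (@curry _ cc c a b) (@uncurry c a b).
Proof. by move=> k; rewrite /uncurry /prodmap comp_id_l curry_eval. Qed.

Lemma uncurryK c a b : cancel (@uncurry c a b) (@curry _ cc c a b).
Proof. by move=> u; rewrite /uncurry /prodmap comp_id_l -curry_unique. Qed.

Lemma uncurry_comp c' c a b (u : hom c (expo cc a b)) (m : hom c' c) :
  uncurry (u \o' m) = uncurry u \o' prodmap cc m (idm a).
Proof. by rewrite /uncurry -comp_assoc prodmap_comp comp_id_l. Qed.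

Lemma uncurry_expmap c a b a' b' (p : hom a' a) (q : hom b b') (u : hom c (expo cc a b)) :
  uncurry (expmap cc p q \o' u) = q \o' uncurry u \o' prodmap cc (idm _) p.
Proof.
rewrite uncurry_comp {1}/uncurry eval_expmap /uncurry.
by rewrite -!comp_assoc !prodmap_comp !comp_id_l !comp_id_r.
Qed.

Definition lcurry (a b x : ob D) (k : hom (prodo cc a b) x) : hom b (expo cc a x) :=
  curry cc (k \o' swapm a b).

Definition luncurry (a b x : ob D) (u : hom b (expo cc a x)) : hom (prodo cc a b) x :=
  uncurry u \o' swapm b a.

Lemma lcurryK a b x : cancel (@lcurry a b x) (@luncurry a b x).
Proof. by move=> k; rewrite /lcurry /luncurry curryK -comp_assoc swapmK comp_id_r. Qed.

Lemma luncurryK a b x : cancel (@luncurry a b x) (@lcurry a b x).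
Proof. by move=> u; rewrite /lcurry /luncurry -comp_assoc swapmK comp_id_r uncurryK. Qed.

Lemma lcurry_inj a b x : injective (@lcurry a b x).
Proof. exact: can_inj (@lcurryK a b x). Qed.

Lemma lcurry_natural a b x a' b' x' (p : hom a' a) (q : hom x x') (g : hom b' b)
  (k : hom (prodo cc a b) x) :
  expmap cc p q \o' lcurry k \o' g = lcurry (q \o' k \o' prodmap cc p g).
Proof.
apply: (can_inj (@uncurryK _ _ _)).
rewrite -comp_assoc uncurry_expmap uncurry_comp !curryK.
by rewrite -!comp_assoc prodmap_comp comp_id_l comp_id_r swapm_prodmap.
Qed.

End LeftCurrying.

Arguments lcurry {D} cc {a b x}.
Arguments luncurry {D} cc {a b x}.
Arguments luncurryK {D} cc {a b x}.

Section DinaturalTranspose.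
Variables (C D : Category) (cc : CCC D) (F G H : Functor (prodCat (opCat C) C) D).

Lemma lcurry_dinatural (al : forall x : ob C, hom ((ProdF cc F G) (x, x)) (H (x, x))) :
  @dinatural C D (ProdF cc F G) H al <->
  @dinatural C D G (ExpF cc F H) (fun x => lcurry cc (al x)).
Proof.
split=> dal a b f /=; first by rewrite !lcurry_natural (dal a b f).
by apply: lcurry_inj; rewrite -!lcurry_natural (dal a b f).
Qed.

Definition dinat_lcurry (al : Dinat (ProdF cc F G) H) : Dinat G (ExpF cc F H) :=
  exist _ _ (proj1 (lcurry_dinatural (proj1_sig al)) (proj2_sig al)).

Lemma luncurry_dinatural (be : forall x : ob C, hom (G (x, x)) ((ExpF cc F H) (x, x))) :
  @dinatural C D G (ExpF cc F H) be ->
  @dinatural C D (ProdF cc F G) H (fun x => luncurry cc (be x)).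
Proof.
move=> dbe; apply/lcurry_dinatural.
by rewrite (functional_extensionality_dep _ _ (fun x => luncurryK cc (be x))).
Qed.

Definition dinat_luncurry (be : Dinat G (ExpF cc F H)) : Dinat (ProdF cc F G) H :=
  exist _ _ (luncurry_dinatural (proj2_sig be)).

End DinaturalTranspose.

Lemma Dinat_eq (C D : Category) (F G : Functor (prodCat (opCat C) C) D)
  (al be : Dinat F G) : (forall x, proj1_sig al x = proj1_sig be x) -> al = be.
Proof.
move=> /= eq_al_be; apply: eq_sig_hprop (functional_extensionality_dep _ _ eq_al_be).
by move=> ? ? ?; apply: proof_irrelevance.
Qed.

Theorem mainTheorem9 (C D : Category) (cc : CCC D)
  (F G H : Functor (prodCat (opCat C) C) D) :
  exists phi : Dinat (ProdF cc F G) H -> Dinat G (ExpF cc F H), bijective phi.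
Proof.
exists (@dinat_lcurry C D cc F G H); exists (@dinat_luncurry C D cc F G H).
- by move=> al; apply: (@Dinat_eq C D) => x; apply: lcurryK.
- by move=> be; apply: (@Dinat_eq C D) => x; apply: luncurryK.
Qed.
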